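(* Let $P_7(\lambda;m,\varepsilon)$ be the polynomial in $\lambda$ defined in the context. There exist $\varepsilon_0>0$ and $\delta>0$, and a unique function $m^c:(0,\varepsilon_0)\to(6-\delta,6+\delta)$ with $m^c(\varepsilon)\to 6$ as $\varepsilon\to0^+$, such that for every $\varepsilon\in(0,\varepsilon_0)$ the polynomial $\widetilde P_7(\lambda;\varepsilon):=P_7(\lambda;m^c(\varepsilon),\varepsilon)$ has exactly one pair of purely imaginary roots $\pm i\omega(\varepsilon)$, with $\omega(\varepsilon)>0$. Moreover, $\omega(\varepsilon)$ converges to $\sqrt3$ as $\varepsilon$ tends to $0$.
   Context: $P_7(\lambda;m,\varepsilon)=a_0\lambda^7+a_1\lambda^6+a_2\lambda^5+a_3\lambda^4+a_4\lambda^3+a_5\lambda^2+a_6\lambda+a_7$ with $a_i=a_i(m,\varepsilon)$: $a_0=2^{11}(\varepsilon-1)^4\varepsilon^2$; $a_1=-2^{11}(\varepsilon^2-\varepsilon)^2[(5\varepsilon^2-2\varepsilon+1)m^2+2(\varepsilon+1)^2m+4]$; $a_2=(\varepsilon^2-\varepsilon)[\varepsilon(59\varepsilon^3-9\varepsilon^2+17\varepsilon-3)m^4+4\varepsilon(15\varepsilon^3+15\varepsilon^2+17\varepsilon+1)m^3+4(\varepsilon+2)(\varepsilon^3+9\varepsilon^2+5\varepsilon+1)m^2-8(2\varepsilon^3-3\varepsilon^2-4\varepsilon-3)m-8(\varepsilon-1)(\varepsilon+2)]$; $a_3=2^7[-\varepsilon^2(5\varepsilon-1)(9\varepsilon^3+\varepsilon^2+7\varepsilon-1)m^6-2\varepsilon^2(59\varepsilon^4-8\varepsilon^3+74\varepsilon^2+8\varepsilon-5)m^5-4\varepsilon(4\varepsilon^5+27\varepsilon^4+24\varepsilon^3+37\varepsilon^2+6\varepsilon-2)m^4+4\varepsilon(4\varepsilon^5+20\varepsilon^4-31\varepsilon^3-23\varepsilon^2-33\varepsilon-1)m^3+4(9\varepsilon^5+27\varepsilon^4-15\varepsilon^3-24\varepsilon^2-12\varepsilon-1)m^2+4(\varepsilon^4+17\varepsilon^3-7\varepsilon^2-9\varepsilon-2)m-4(\varepsilon-1)^2(2\varepsilon+1)]$;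 $a_4=2^3[\varepsilon^2(9\varepsilon-1)^2(\varepsilon-1)^2m^8+8\varepsilon^2(\varepsilon-1)(45\varepsilon^3+5\varepsilon^2-21\varepsilon+3)m^7+8\varepsilon(21\varepsilon^5-58\varepsilon^4-84\varepsilon^3-32\varepsilon^2+27\varepsilon-2)m^6-16\varepsilon(34\varepsilon^5+42\varepsilon^4+113\varepsilon^3+81\varepsilon^2-7\varepsilon-7)m^5-16(7\varepsilon^6+96\varepsilon^5+75\varepsilon^4+176\varepsilon^3+42\varepsilon^2-10\varepsilon-2)m^4+16\varepsilon(6\varepsilon^4-75\varepsilon^3-65\varepsilon^2-117\varepsilon-5)m^3+16(29\varepsilon^4-7\varepsilon^3-48\varepsilon^2-31\varepsilon-7)m^2+32(\varepsilon-1)(7\varepsilon^2+14\varepsilon+3)m-16(\varepsilon-1)^2]$; $a_5=2^5m[\varepsilon^2(\varepsilon-1)^2(9\varepsilon^2+\varepsilon-2)m^7+(\varepsilon^2-\varepsilon)(38\varepsilon^4+46\varepsilon^3-39\varepsilon^2+3)m^6+(36\varepsilon^6+33\varepsilon^5-123\varepsilon^4-95\varepsilon^3+54\varepsilon^2-1)m^5-(8\varepsilon^6-8\varepsilon^5+169\varepsilon^4+233\varepsilon^3+25\varepsilon^2-41\varepsilon-2)m^4-(60\varepsilon^5+110\varepsilon^4+320\varepsilon^3+129\varepsilon^2-22\varepsilon-21)m^3-4(16\varepsilon^4+37\varepsilon^3+41\varepsilon^2+7\varepsilon-5)m^2+2(4\varepsilon^3-37\varepsilon^2-10\varepsilon-5)m+4(5\varepsilon^2-2\varepsilon-3)]$;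 $a_6=2^3m[2\varepsilon^2(\varepsilon-1)^2(\varepsilon+1)(2\varepsilon-1)m^7+(\varepsilon^2-\varepsilon)(16\varepsilon^4+58\varepsilon^3-19\varepsilon^2-10\varepsilon+3)m^6+(16\varepsilon^6+72\varepsilon^5-39\varepsilon^4-171\varepsilon^3+42\varepsilon^2+17\varepsilon-1)m^5+2(20\varepsilon^5-12\varepsilon^4-113\varepsilon^3-69\varepsilon^2+41\varepsilon+5)m^4-(2\varepsilon+1)(18\varepsilon^3+81\varepsilon^2+80\varepsilon-51)m^3-4(28\varepsilon^3+31\varepsilon^2+20\varepsilon-15)m^2-4(11\varepsilon-3)(\varepsilon+1)m-8(1-\varepsilon)]$; $a_7=2^4(m^2+m^3)[\varepsilon^2(\varepsilon^2-1)(2\varepsilon-1)m^4+\varepsilon(2\varepsilon-1)(3\varepsilon^2-3\varepsilon-2)m^3+(2\varepsilon^4-13\varepsilon^2+4\varepsilon+1)m^2-3(2\varepsilon-1)(\varepsilon+1)m+2(1-2\varepsilon)]$. *)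

From Stdlib Require Import Reals.
From Coquelicot Require Import Coquelicot.
Open Scope R_scope.

Definition a0 (m e : R) : R := 2^11 * (e-1)^4 * e^2.

Definition a1 (m e : R) : R :=
  - 2^11 * (e^2-e)^2 * ((5*e^2-2*e+1)*m^2 + 2*(e+1)^2*m + 4).

Definition a2 (m e : R) : R :=
  (e^2-e) * ( e*(59*e^3-9*e^2+17*e-3)*m^4
            + 4*e*(15*e^3+15*e^2+17*e+1)*m^3
            + 4*(e+2)*(e^3+9*e^2+5*e+1)*m^2
            - 8*(2*e^3-3*e^2-4*e-3)*m
            - 8*(e-1)*(e+2) ).

Definition a3 (m e : R) : R :=
  2^7 * ( - e^2*(5*e-1)*(9*e^3+e^2+7*e-1)*m^6
          - 2*e^2*(59*e^4-8*e^3+74*e^2+8*e-5)*m^5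
          - 4*e*(4*e^5+27*e^4+24*e^3+37*e^2+6*e-2)*m^4
          + 4*e*(4*e^5+20*e^4-31*e^3-23*e^2-33*e-1)*m^3
          + 4*(9*e^5+27*e^4-15*e^3-24*e^2-12*e-1)*m^2
          + 4*(e^4+17*e^3-7*e^2-9*e-2)*m
          - 4*(e-1)^2*(2*e+1) ).

Definition a4 (m e : R) : R :=
  2^3 * ( e^2*(9*e-1)^2*(e-1)^2*m^8
        + 8*e^2*(e-1)*(45*e^3+5*e^2-21*e+3)*m^7
        + 8*e*(21*e^5-58*e^4-84*e^3-32*e^2+27*e-2)*m^6
        - 16*e*(34*e^5+42*e^4+113*e^3+81*e^2-7*e-7)*m^5
        - 16*(7*e^6+96*e^5+75*e^4+176*e^3+42*e^2-10*e-2)*m^4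
        + 16*e*(6*e^4-75*e^3-65*e^2-117*e-5)*m^3
        + 16*(29*e^4-7*e^3-48*e^2-31*e-7)*m^2
        + 32*(e-1)*(7*e^2+14*e+3)*m
        - 16*(e-1)^2 ).

Definition a5 (m e : R) : R :=
  2^5 * m * ( e^2*(e-1)^2*(9*e^2+e-2)*m^7
            + (e^2-e)*(38*e^4+46*e^3-39*e^2+3)*m^6
            + (36*e^6+33*e^5-123*e^4-95*e^3+54*e^2-1)*m^5
            - (8*e^6-8*e^5+169*e^4+233*e^3+25*e^2-41*e-2)*m^4
            - (60*e^5+110*e^4+320*e^3+129*e^2-22*e-21)*m^3
            - 4*(16*e^4+37*e^3+41*e^2+7*e-5)*m^2
            + 2*(4*e^3-37*e^2-10*e-5)*m
            + 4*(5*e^2-2*e-3) ).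

Definition a6 (m e : R) : R :=
  2^3 * m * ( 2*e^2*(e-1)^2*(e+1)*(2*e-1)*m^7
            + (e^2-e)*(16*e^4+58*e^3-19*e^2-10*e+3)*m^6
            + (16*e^6+72*e^5-39*e^4-171*e^3+42*e^2+17*e-1)*m^5
            + 2*(20*e^5-12*e^4-113*e^3-69*e^2+41*e+5)*m^4
            - (2*e+1)*(18*e^3+81*e^2+80*e-51)*m^3
            - 4*(28*e^3+31*e^2+20*e-15)*m^2
            - 4*(11*e-3)*(e+1)*m
            - 8*(1-e) ).

Definition a7 (m e : R) : R :=
  2^4 * (m^2+m^3) * ( e^2*(e^2-1)*(2*e-1)*m^4
                    + e*(2*e-1)*(3*e^2-3*e-2)*m^3
                    + (2*e^4-13*e^2+4*e+1)*m^2
                    - 3*(2*e-1)*(e+1)*m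
                    + 2*(1-2*e) ).

Definition P7 (lam : C) (m e : R) : C :=
  (RtoC (a0 m e) * Cpow lam 7 + RtoC (a1 m e) * Cpow lam 6
 + RtoC (a2 m e) * Cpow lam 5 + RtoC (a3 m e) * Cpow lam 4
 + RtoC (a4 m e) * Cpow lam 3 + RtoC (a5 m e) * Cpow lam 2
 + RtoC (a6 m e) * lam + RtoC (a7 m e))%C.

Definition purely_imaginary (z : C) : Prop := Re z = 0 /\ Im z <> 0.

Definition unique_imag_pair (m e w : R) : Prop :=
  0 < w /\
  forall z : C, purely_imaginary z -> (P7 z m e = 0%C <-> (z = (0, w) \/ z = (0, - w))).

(** Put λ = iω and x = ω².  Then P7(iω) = re_P7(x) + iω·im_P7(x) for two cubics in x whose
    coefficients are polynomials in (m, ε).  At ε = 0, (m, x) = (6, 3) is a common root of re_P7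
    and im_P7 at which their Jacobian in (m, x) is invertible, so for small ε they keep a unique
    common root (m^c(ε), x(ε)) nearby, at distance O(ε), and ω(ε) = √x(ε).
    Quantitatively: expanded exactly in u = m − 6, v = x − 3 and ε, each polynomial involved has
    difference quotients on the box |u|, |v| ≤ 10⁻³, 0 ≤ ε ≤ 10⁻⁶ lying in explicit intervals
    around its linear coefficients (a rational computation).  This keeps the Jacobian determinant
    away from 0, which gives uniqueness; existence follows from the intermediate value theorem,
    first for im_P7 in v, then for re_P7 along the curve im_P7 = 0.  Finally a0 ≥ 0 ≥ a2 and
    a4 > 0 make im_P7 strictly decreasing on x ≥ 0, so ±iω(ε) are the only purely imaginary
    roots. *)

From Stdlib Require Import Reals QArith Qreals Psatz List ClassicalEpsilon.
From Coquelicot Require Import Coquelicot.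
Import ListNotations.
Open Scope R_scope.

(** * Elementary real analysis *)

Lemma Rabs_mult_le x y X Y : Rabs x <= X -> Rabs y <= Y -> Rabs (x * y) <= X * Y.
Proof. intros Hx Hy. rewrite Rabs_mult. apply Rmult_le_compat; auto using Rabs_pos. Qed.

Lemma Rabs_mult_ge x y Y : Y <= Rabs y -> Rabs x * Y <= Rabs (x * y).
Proof. intro H. rewrite Rabs_mult. apply Rmult_le_compat_l; [apply Rabs_pos | exact H]. Qed.

Lemma Rabs_mult4_le (c x y z C X Y Z : R) :
  Rabs c <= C -> Rabs x <= X -> Rabs y <= Y -> Rabs z <= Z ->
  Rabs (c * x * y * z) <= C * X * Y * Z.
Proof. intros. repeat apply Rabs_mult_le; assumption. Qed.

Lemma Rabs_add_sub_le (x y a b X Y : R) :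
  Rabs (x - a) <= X -> Rabs (y - b) <= Y -> Rabs (x + y - (a + b)) <= X + Y.
Proof.
  intros Hx Hy. replace (x + y - (a + b)) with ((x - a) + (y - b)) by ring.
  pose proof (Rabs_triang (x - a) (y - b)). lra.
Qed.

Lemma Rabs_pow_le (x d : R) (n : nat) : Rabs x <= d -> Rabs (x ^ n) <= d ^ n.
Proof. intro H. rewrite <- RPow_abs. apply pow_incr. split; [apply Rabs_pos | exact H]. Qed.

Lemma cubic_strict_anti (A0 A2 A4 A6 x y : R) :
  0 <= A0 -> A2 <= 0 -> 0 < A4 -> 0 <= x -> x < y ->
  - A0 * y ^ 3 + A2 * y ^ 2 - A4 * y + A6 < - A0 * x ^ 3 + A2 * x ^ 2 - A4 * x + A6.
Proof.
  intros H0 H2 H4 Hx Hxy.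
  assert (0 <= y ^ 3 - x ^ 3) by
    (replace (y ^ 3 - x ^ 3) with ((y - x) * (y * y + x * y + x * x)) by ring;
     apply Rmult_le_pos; nra).
  assert (0 <= y ^ 2 - x ^ 2) by
    (replace (y ^ 2 - x ^ 2) with ((y - x) * (y + x)) by ring; apply Rmult_le_pos; lra).
  nra.
Qed.

Lemma cramer_trivial a b c d x y :
  x * a + y * b = 0 -> x * c + y * d = 0 -> a * d - b * c <> 0 -> x = 0 /\ y = 0.
Proof.
  intros E1 E2 D.
  assert (Hx : x * (a * d - b * c) = 0)
    by (transitivity (d * (x * a + y * b) - b * (x * c + y * d)); [ring | rewrite E1, E2; ring]).
  assert (Hy : y * (a * d - b * c) = 0)
    by (transitivity (a * (x * c + y * d) - c * (x * a + y * b)); [ring | rewrite E1, E2; ring]).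
  apply Rmult_integral in Hx, Hy. split; [destruct Hx | destruct Hy]; tauto.
Qed.

Lemma sqrt_sub_le x y : 0 <= x -> 1 <= y -> Rabs (sqrt x - sqrt y) <= Rabs (x - y).
Proof.
  intros Hx Hy.
  assert (Sy : 1 <= sqrt y) by (rewrite <- sqrt_1; apply sqrt_le_1_alt; lra).
  pose proof (sqrt_pos x).
  replace (x - y) with ((sqrt x - sqrt y) * (sqrt x + sqrt y))
    by (transitivity (sqrt x * sqrt x - sqrt y * sqrt y); [ring | rewrite !sqrt_sqrt; lra]).
  rewrite Rabs_mult, (Rabs_right (sqrt x + sqrt y)) by lra.
  pose proof (Rabs_pos (sqrt x - sqrt y)). nra.
Qed.

Definition clamp (r x : R) : R := Rmax (- r) (Rmin r x).

Lemma Rabs_clamp_le r x : 0 <= r -> Rabs (clamp r x) <= r.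
Proof.
  intro Hr. apply Rabs_le_between. unfold clamp.
  split; [apply Rmax_l | apply Rmax_lub; [lra | apply Rmin_l]].
Qed.

Lemma clamp_id r x : Rabs x <= r -> clamp r x = x.
Proof.
  intro H. apply Rabs_le_between in H. unfold clamp.
  rewrite Rmin_right, Rmax_right; lra.
Qed.

Lemma clamp_lipschitz r x y : Rabs (clamp r x - clamp r y) <= Rabs (x - y).
Proof.
  unfold clamp, Rmax, Rmin.
  repeat destruct Rle_dec; split_Rabs; lra.
Qed.

Lemma Rabs_mult_div_succ_lt K eps : 0 < eps -> Rabs K * (eps / (Rabs K + 1)) < eps.
Proof.
  intro Heps. pose proof (Rabs_pos K).
  apply Rmult_lt_reg_r with (Rabs K + 1); [lra|]. field_simplify; lra.
Qed.

Lemma lipschitz_continuity (f : R -> R) (K : R) :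
  (forall x y, Rabs (f x - f y) <= K * Rabs (x - y)) -> continuity f.
Proof.
  intros Hf x eps Heps.
  pose proof (Rabs_pos K). pose proof (Rle_abs K).
  exists (eps / (Rabs K + 1)). split; [apply Rdiv_lt_0_compat; lra|].
  intros y [_ Hy]. simpl in *. unfold R_dist in *.
  pose proof (Rabs_pos (y - x)).
  assert (Rabs K * Rabs (y - x) <= Rabs K * (eps / (Rabs K + 1))) by (apply Rmult_le_compat_l; lra).
  pose proof (Rabs_mult_div_succ_lt K eps Heps).
  specialize (Hf y x). nra.
Qed.

Lemma filterlim_at_right_of_linear_bound (f : R -> R) (l K eps0 : R) : 0 < eps0 ->
  (forall e, 0 < e < eps0 -> Rabs (f e - l) <= K * e) -> filterlim f (at_right 0) (locally l).
Proof.
  intros Heps0 Hf. apply filterlim_locally. intros eps.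
  pose proof (cond_pos eps) as Heps. pose proof (Rabs_pos K). pose proof (Rle_abs K).
  assert (Hr : 0 < Rmin eps0 (eps / (Rabs K + 1)))
    by (apply Rmin_glb_lt; [lra | apply Rdiv_lt_0_compat; lra]).
  exists (mkposreal _ Hr). intros y Hy Hy0.
  change (Rabs (y - 0) < Rmin eps0 (eps / (Rabs K + 1))) in Hy.
  rewrite Rminus_0_r, Rabs_right in Hy by lra.
  change (Rabs (f y - l) < eps).
  pose proof (Rmin_l eps0 (eps / (Rabs K + 1))). pose proof (Rmin_r eps0 (eps / (Rabs K + 1))).
  assert (Rabs K * y <= Rabs K * (eps / (Rabs K + 1))) by (apply Rmult_le_compat_l; lra).
  pose proof (Rabs_mult_div_succ_lt K eps Heps).
  specialize (Hf y ltac:(lra)). nra.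
Qed.

(** * Difference quotients of integer polynomials in three variables *)

Fixpoint pow_diff_quotient (a b : R) (n : nat) : R :=
  match n with
  | O => 0
  | S n => a * pow_diff_quotient a b n + b ^ n
  end.

Lemma pow_sub_factor (a b : R) (n : nat) : a ^ n - b ^ n = (a - b) * pow_diff_quotient a b n.
Proof.
  induction n as [|n IH]; simpl; [ring|].
  replace (a * a ^ n - b * b ^ n) with (a * (a ^ n - b ^ n) + (a - b) * b ^ n) by ring.
  rewrite IH; ring.
Qed.

Lemma pow_diff_quotient_1 (a b : R) : pow_diff_quotient a b 1 = 1.
Proof. simpl; ring. Qed.

Lemma Rabs_pow_diff_quotient_le (a b d : R) (n : nat) :
  Rabs a <= d -> Rabs b <= d -> Rabs (pow_diff_quotient a b n) <= INR n * d ^ (n - 1).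
Proof.
  intros Ha Hb.
  induction n as [|n IH]; simpl pow_diff_quotient.
  - rewrite Rabs_R0; simpl; lra.
  - assert (Hq : Rabs (a * pow_diff_quotient a b n) <= d * (INR n * d ^ (n - 1)))
      by (apply Rabs_mult_le; assumption).
    assert (E : d * (INR n * d ^ (n - 1)) = INR n * d ^ n)
      by (destruct n; simpl; [ring | rewrite Nat.sub_0_r; ring]).
    pose proof (Rabs_pow_le b d n Hb).
    pose proof (Rabs_triang (a * pow_diff_quotient a b n) (b ^ n)).
    replace (S n - 1)%nat with n by lia. rewrite S_INR. lra.
Qed.

Lemma Q2R_inject_Z (z : Z) : Q2R (inject_Z z) = IZR z.
Proof. unfold Q2R, inject_Z; simpl; field. Qed.

Lemma Q2R_Qpower_nat (q : Q) (n : nat) : Q2R (q ^ Z.of_nat n) = Q2R q ^ n.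
Proof. rewrite RMicromega.Q2RpowerRZ, pow_powerRZ by lia. reflexivity. Qed.

Lemma Q2R_Qred (q : Q) : Q2R (Qred q) = Q2R q.
Proof. apply Qeq_eqR, Qred_correct. Qed.

Record monomial := Mono { coef : Z; exp_u : nat; exp_v : nat; exp_e : nat }.
Arguments Mono _%_Z _%_nat _%_nat _%_nat.

Definition poly3 := list monomial.

Definition eval_mono (t : monomial) (u v e : R) : R :=
  IZR (coef t) * u ^ exp_u t * v ^ exp_v t * e ^ exp_e t.

Fixpoint eval3 (p : poly3) (u v e : R) : R :=
  match p with [] => 0 | t :: p => eval_mono t u v e + eval3 p u v e end.

Definition has_exps (i j k : nat) (t : monomial) : bool :=
  Nat.eqb (exp_u t) i && Nat.eqb (exp_v t) j && Nat.eqb (exp_e t) k.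

Fixpoint coeff (i j k : nat) (p : poly3) : Z :=
  match p with
  | [] => 0
  | t :: p => (if has_exps i j k t then coef t else 0) + coeff i j k p
  end%Z.

Fixpoint sumQ (f : monomial -> Q) (p : poly3) : Q :=
  match p with [] => 0 | t :: p => Qred (f t + sumQ f p) end%Q.

(* Bound for the u-difference quotient of a monomial on |u| <= du, |v| <= dv, |e| <= de: the
   u-derivative of its majorant at the corner.  The monomial u itself is excluded, its coefficient
   being kept exactly (see [eval3_slopes]); this is what pins down the signs of the Jacobian. *)
Definition slope_u (du dv de : Q) (t : monomial) : Q :=
  if has_exps 1 0 0 t then 0 else
  inject_Z (Z.abs (coef t) * Z.of_nat (exp_u t))
  * du ^ Z.of_nat (exp_u t - 1) * dv ^ Z.of_nat (exp_v t) * de ^ Z.of_nat (exp_e t).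

Definition slope_v (du dv de : Q) (t : monomial) : Q :=
  if has_exps 0 1 0 t then 0 else
  inject_Z (Z.abs (coef t) * Z.of_nat (exp_v t))
  * dv ^ Z.of_nat (exp_v t - 1) * du ^ Z.of_nat (exp_u t) * de ^ Z.of_nat (exp_e t).

Definition slope_e (du dv de : Q) (t : monomial) : Q :=
  if has_exps 0 0 1 t then 0 else
  inject_Z (Z.abs (coef t) * Z.of_nat (exp_e t))
  * de ^ Z.of_nat (exp_e t - 1) * du ^ Z.of_nat (exp_u t) * dv ^ Z.of_nat (exp_v t).

Lemma has_exps_spec i j k t :
  has_exps i j k t = true <-> exp_u t = i /\ exp_v t = j /\ exp_e t = k.
Proof. unfold has_exps. rewrite !Bool.andb_true_iff, !Nat.eqb_eq. tauto. Qed.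

Lemma slope_term_bound (c : Z) (n : nat) (x1 x2 y z : R) (d Y Z : Q) (j k : nat) :
  Rabs x1 <= Q2R d -> Rabs x2 <= Q2R d -> Rabs y <= Q2R Y -> Rabs z <= Q2R Z ->
  Rabs (IZR c * pow_diff_quotient x2 x1 n * y ^ j * z ^ k)
  <= Q2R (inject_Z (Z.abs c * Z.of_nat n) * d ^ Z.of_nat (n - 1) * Y ^ Z.of_nat j * Z ^ Z.of_nat k).
Proof.
  intros. rewrite !Q2R_mult, !Q2R_Qpower_nat, Q2R_inject_Z, mult_IZR, abs_IZR, <- INR_IZR_INZ.
  rewrite (Rmult_assoc (Rabs (IZR c))).
  apply Rabs_mult4_le; auto using Rle_refl, Rabs_pow_diff_quotient_le, Rabs_pow_le.
Qed.

Section Slopes.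

Variables (du dv de : Q) (u1 v1 e1 u2 v2 e2 : R).
Hypotheses (Hu1 : Rabs u1 <= Q2R du) (Hu2 : Rabs u2 <= Q2R du)
  (Hv1 : Rabs v1 <= Q2R dv) (Hv2 : Rabs v2 <= Q2R dv)
  (He1 : Rabs e1 <= Q2R de) (He2 : Rabs e2 <= Q2R de).

Lemma eval_mono_slopes t : exists gu gv ge,
  eval_mono t u2 v2 e2 - eval_mono t u1 v1 e1 = (u2 - u1) * gu + (v2 - v1) * gv + (e2 - e1) * ge /\
  Rabs (gu - IZR (if has_exps 1 0 0 t then coef t else 0)) <= Q2R (slope_u du dv de t) /\
  Rabs (gv - IZR (if has_exps 0 1 0 t then coef t else 0)) <= Q2R (slope_v du dv de t) /\
  Rabs (ge - IZR (if has_exps 0 0 1 t then coef t else 0)) <= Q2R (slope_e du dv de t).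
Proof.
  unfold eval_mono, slope_u, slope_v, slope_e.
  destruct t as [c i j k]; simpl coef; simpl exp_u; simpl exp_v; simpl exp_e.
  exists (IZR c * pow_diff_quotient u2 u1 i * v2 ^ j * e2 ^ k),
    (IZR c * pow_diff_quotient v2 v1 j * u1 ^ i * e2 ^ k),
    (IZR c * pow_diff_quotient e2 e1 k * u1 ^ i * v1 ^ j).
  split.
  { replace (IZR c * u2 ^ i * v2 ^ j * e2 ^ k - IZR c * u1 ^ i * v1 ^ j * e1 ^ k) with
      (IZR c * (u2 ^ i - u1 ^ i) * v2 ^ j * e2 ^ k + IZR c * (v2 ^ j - v1 ^ j) * u1 ^ i * e2 ^ k
       + IZR c * (e2 ^ k - e1 ^ k) * u1 ^ i * v1 ^ j) by ring.
    rewrite !pow_sub_factor; ring. }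
  repeat split; destruct (has_exps _ _ _ _) eqn:E.
  all: try (rewrite Rminus_0_r; apply slope_term_bound; assumption).
  all: apply has_exps_spec in E; simpl in E; destruct E as (-> & -> & ->).
  all: rewrite RMicromega.Q2R_0, pow_diff_quotient_1; simpl.
  all: replace (_ - _) with 0 by ring; rewrite Rabs_R0; apply Rle_refl.
Qed.

Lemma eval3_slopes p : exists gu gv ge,
  eval3 p u2 v2 e2 - eval3 p u1 v1 e1 = (u2 - u1) * gu + (v2 - v1) * gv + (e2 - e1) * ge /\
  Rabs (gu - IZR (coeff 1 0 0 p)) <= Q2R (sumQ (slope_u du dv de) p) /\
  Rabs (gv - IZR (coeff 0 1 0 p)) <= Q2R (sumQ (slope_v du dv de) p) /\
  Rabs (ge - IZR (coeff 0 0 1 p)) <= Q2R (sumQ (slope_e du dv de) p).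
Proof.
  induction p as [|t p IH]; cbn [eval3 coeff sumQ].
  - exists 0, 0, 0. rewrite RMicromega.Q2R_0, Rminus_diag, Rabs_R0. repeat split; lra.
  - destruct IH as (Gu & Gv & Ge & HG & Bu & Bv & Be).
    destruct (eval_mono_slopes t) as (gu & gv & ge & Hg & bu & bv & be).
    exists (gu + Gu), (gv + Gv), (ge + Ge).
    rewrite !Q2R_Qred, !Q2R_plus, !plus_IZR.
    split; [lra|].
    repeat split; apply Rabs_add_sub_le; assumption.
Qed.

End Slopes.

(** * P7 on the imaginary axis near m = 6, ω² = 3 *)

Definition re_P7 (m e x : R) : R := - a1 m e * x ^ 3 + a3 m e * x ^ 2 - a5 m e * x + a7 m e.
Definition im_P7 (m e x : R) : R := - a0 m e * x ^ 3 + a2 m e * x ^ 2 - a4 m e * x + a6 m e.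

Lemma P7_imaginary_axis (w m e : R) :
  P7 (0, w) m e = (re_P7 m e (w ^ 2), w * im_P7 m e (w ^ 2)).
Proof.
  unfold P7, re_P7, im_P7. cbv [Cpow Cplus Cmult RtoC fst snd C1].
  f_equal; ring.
Qed.

Lemma P7_imaginary_axis_root (w m e : R) :
  P7 (0, w) m e = 0%C <-> re_P7 m e (w ^ 2) = 0 /\ w * im_P7 m e (w ^ 2) = 0.
Proof.
  rewrite P7_imaginary_axis. split.
  - intro H. exact (conj (f_equal fst H) (f_equal snd H)).
  - intros [HR HI]. rewrite HR, HI. reflexivity.
Qed.

Definition re_P7_taylor : poly3 := [
  Mono 58875264 0 0 1; Mono 6547968 0 0 2; Mono (-982937088) 0 0 3; Mono (-1133637120) 0 0 4;
  Mono 2584866816 0 0 5; Mono (-6112641024) 0 0 6; Mono (-150528) 0 1 0; Mono 21783552 0 1 1;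
  Mono (-9010176) 0 1 2; Mono (-241898496) 0 1 3; Mono (-1473067008) 0 1 4;
  Mono 915038208 0 1 5; Mono (-3195666432) 0 1 6; Mono (-25088) 0 2 0; Mono 967680 0 2 1;
  Mono (-3153408) 0 2 2; Mono 25616384 0 2 3; Mono (-362941440) 0 2 4; Mono 16312320 0 2 5;
  Mono (-384860160) 0 2 6; Mono 106496 0 3 2; Mono (-311296) 0 3 3; Mono 696320 0 3 4;
  Mono (-884736) 0 3 5; Mono 393216 0 3 6; Mono 1401792 1 0 0; Mono 75918528 1 0 1;
  Mono 105600768 1 0 2; Mono (-1355422464) 1 0 3; Mono (-780069888) 1 0 4;
  Mono 3497582592 1 0 5; Mono (-6592610304) 1 0 6; Mono 389760 1 1 0; Mono 26854144 1 1 1;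
  Mono 27626624 1 1 2; Mono (-325036032) 1 1 3; Mono (-1269441024) 1 1 4;
  Mono 1235699712 1 1 5; Mono (-3299733504) 1 1 6; Mono (-7168) 1 2 0; Mono 751104 1 2 1;
  Mono (-2049536) 1 2 2; Mono 39784960 1 2 3; Mono (-335830528) 1 2 4; Mono 23721984 1 2 5;
  Mono (-367017984) 1 2 6; Mono 28672 1 3 2; Mono (-98304) 1 3 3; Mono 237568 1 3 4;
  Mono (-294912) 1 3 5; Mono 126976 1 3 6; Mono 1027712 2 0 0; Mono 40804832 2 0 1;
  Mono 106951296 2 0 2; Mono (-824996352) 2 0 3; Mono (-183831552) 2 0 4;
  Mono 2053983744 2 0 5; Mono (-3094695936) 2 0 6; Mono 324416 2 1 0; Mono 13942144 2 1 1;
  Mono 32889664 2 1 2; Mono (-208786432) 2 1 3; Mono (-445994496) 2 1 4; Mono 717009408 2 1 5;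
  Mono (-1466394624) 2 1 6; Mono (-512) 2 2 0; Mono 205824 2 2 1; Mono (-685056) 2 2 2;
  Mono 21050880 2 2 3; Mono (-128263680) 2 2 4; Mono 11358720 2 2 5; Mono (-144912384) 2 2 6;
  Mono 2048 2 3 2; Mono (-8192) 2 3 3; Mono 20480 2 3 4; Mono (-24576) 2 3 5; Mono 10240 2 3 6;
  Mono 302672 3 0 0; Mono 11988368 3 0 1; Mono 48318624 3 0 2; Mono (-284021760) 3 0 3;
  Mono (-15485184) 3 0 4; Mono 687241728 3 0 5; Mono (-829670400) 3 0 6; Mono 98432 3 1 0;
  Mono 4010624 3 1 1; Mono 15345280 3 1 2; Mono (-77623936) 3 1 3; Mono (-82844416) 3 1 4;
  Mono 236433408 3 1 5; Mono (-367660032) 3 1 6; Mono 24064 3 2 1; Mono (-182784) 3 2 2;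
  Mono 5431808 3 2 3; Mono (-25931264) 3 2 4; Mono 2627584 3 2 5; Mono (-30367744) 3 2 6;
  Mono 44608 4 0 0; Mono 2086480 4 0 1; Mono 12335792 4 0 2; Mono (-59823456) 4 0 3;
  Mono (-1432480) 4 0 4; Mono 143697024 4 0 5; Mono (-139894272) 4 0 6; Mono 14688 4 1 0;
  Mono 691840 4 1 1; Mono 3972576 4 1 2; Mono (-17580224) 4 1 3; Mono (-9244928) 4 1 4;
  Mono 48784896 4 1 5; Mono (-57328128) 4 1 6; Mono 1024 4 2 1; Mono (-33792) 4 2 2;
  Mono 749056 4 2 3; Mono (-2930688) 4 2 4; Mono 324096 4 2 5; Mono (-3565568) 4 2 6;
  Mono 3280 5 0 0; Mono 215040 5 0 1; Mono 1902400 5 0 2; Mono (-7837296) 5 0 3;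
  Mono (-785440) 5 0 4; Mono 19254912 5 0 5; Mono (-15334656) 5 0 6; Mono 1088 5 1 0;
  Mono 71264 5 1 1; Mono 620192 5 1 2; Mono (-2442464) 5 1 3; Mono (-785632) 5 1 4;
  Mono 6471296 5 1 5; Mono (-5778944) 5 1 6; Mono (-3328) 5 2 2; Mono 53248 5 2 3;
  Mono (-175616) 5 2 4; Mono 20480 5 2 5; Mono (-222464) 5 2 6; Mono 96 6 0 0;
  Mono 12128 6 0 1; Mono 175776 6 0 2; Mono (-619664) 6 0 3; Mono (-169072) 6 0 4;
  Mono 1615616 6 0 5; Mono (-1079424) 6 0 6; Mono 32 6 1 0; Mono 4032 6 1 1; Mono 57984 6 1 2;
  Mono (-201440) 6 1 3; Mono (-69216) 6 1 4; Mono 539616 6 1 5; Mono (-377088) 6 1 6;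
  Mono (-128) 6 2 2; Mono 1536 6 2 3; Mono (-4352) 6 2 4; Mono 512 6 2 5; Mono (-5760) 6 2 6;
  Mono 288 7 0 1; Mono 8944 7 0 2; Mono (-26816) 7 0 3; Mono (-14896) 7 0 4; Mono 77600 7 0 5;
  Mono (-45120) 7 0 6; Mono 96 7 1 1; Mono 2976 7 1 2; Mono (-8928) 7 1 3; Mono (-4960) 7 1 4;
  Mono 25856 7 1 5; Mono (-15040) 7 1 6; Mono 192 8 0 2; Mono (-480) 8 0 3; Mono (-480) 8 0 4;
  Mono 1632 8 0 5; Mono (-864) 8 0 6; Mono 64 8 1 2; Mono (-160) 8 1 3; Mono (-160) 8 1 4;
  Mono 544 8 1 5; Mono (-288) 8 1 6 ].

Definition im_P7_taylor : poly3 := [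
  Mono (-2264640) 0 0 1; Mono (-104030616) 0 0 2; Mono 158515632 0 0 3;
  Mono (-2441935800) 0 0 4; Mono 10140339456 0 0 5; Mono (-5670628128) 0 0 6;
  Mono (-294784) 0 1 0; Mono (-2359168) 0 1 1; Mono (-36910480) 0 1 2; Mono 45917472 0 1 3;
  Mono (-742175184) 0 1 4; Mono 3365733888 0 1 5; Mono (-1921828032) 0 1 6; Mono (-448) 0 2 1;
  Mono (-16728) 0 2 2; Mono 32304 0 2 3; Mono (-73208) 0 2 4; Mono (-13056) 0 2 5;
  Mono 71136 0 2 6; Mono (-2048) 0 3 2; Mono 8192 0 3 3; Mono (-12288) 0 3 4; Mono 8192 0 3 5;
  Mono (-2048) 0 3 6; Mono (-78400) 1 0 0; Mono 375304 1 0 1; Mono (-101016456) 1 0 2;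
  Mono 173246856 1 0 3; Mono (-3903221304) 1 0 4; Mono 12869149392 1 0 5;
  Mono (-7156554336) 1 0 6; Mono (-209664) 1 1 0; Mono (-821200) 1 1 1; Mono (-35293360) 1 1 2;
  Mono 39632048 1 1 3; Mono (-1216647888) 1 1 4; Mono 4279145952 1 1 5;
  Mono (-2425158720) 1 1 6; Mono (-120) 1 2 1; Mono 1720 1 2 2; Mono (-24760) 1 2 3;
  Mono 23944 1 2 4; Mono (-58288) 1 2 5; Mono 57504 1 2 6; Mono (-49056) 2 0 0;
  Mono 1043768 2 0 1; Mono (-39768292) 2 0 2; Mono 119849712 2 0 3; Mono (-2598459600) 2 0 4;
  Mono 7160783112 2 0 5; Mono (-3934738908) 2 0 6; Mono (-54400) 2 1 0; Mono 291920 2 1 1;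
  Mono (-13185624) 2 1 2; Mono 25387808 2 1 3; Mono (-823457632) 2 1 4; Mono 2385533616 2 1 5;
  Mono (-1333269480) 2 1 6; Mono (-8) 2 2 1; Mono 540 2 2 2; Mono (-5520) 2 2 3;
  Mono 5808 2 2 4; Mono (-14648) 2 2 5; Mono 13828 2 2 6; Mono (-13920) 3 0 0;
  Mono 339584 3 0 1; Mono (-8496572) 3 0 2; Mono 56953312 3 0 3; Mono (-957087432) 3 0 4;
  Mono 2281258656 3 0 5; Mono (-1230783516) 3 0 6; Mono (-6144) 3 1 0; Mono 200320 3 1 1;
  Mono (-2417640) 3 1 2; Mono 13125568 3 1 3; Mono (-306916272) 3 1 4; Mono 761433792 3 1 5;
  Mono (-417021288) 3 1 6; Mono 68 3 2 2; Mono (-544) 3 2 3; Mono 632 3 2 4;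
  Mono (-1632) 3 2 5; Mono 1476 3 2 6; Mono (-2280) 4 0 0; Mono 34736 4 0 1;
  Mono (-1205453) 4 0 2; Mono 17131884 4 0 3; Mono (-215422614) 4 0 4; Mono 455010972 4 0 5;
  Mono (-239520621) 4 0 6; Mono (-256) 4 1 0; Mono 40960 4 1 1; Mono (-228846) 4 1 2;
  Mono 4342408 4 1 3; Mono (-69713124) 4 1 4; Mono 152168040 4 1 5; Mono (-81153310) 4 1 6;
  Mono 3 4 2 2; Mono (-20) 4 2 3; Mono 26 4 2 4; Mono (-68) 4 2 5; Mono 59 4 2 6;
  Mono (-208) 5 0 0; Mono (-1456) 5 0 1; Mono (-148080) 5 0 2; Mono 3158704 5 0 3;
  Mono (-30528576) 5 0 4; Mono 58172288 5 0 5; Mono (-29690112) 5 0 6; Mono 3712 5 1 1;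
  Mono (-14720) 5 1 2; Mono 858240 5 1 3; Mono (-9952640) 5 1 4; Mono 19492608 5 1 5;
  Mono (-10059520) 5 1 6; Mono (-8) 6 0 0; Mono (-488) 6 0 1; Mono (-16608) 6 0 2;
  Mono 346488 6 0 3; Mono (-2671176) 6 0 4; Mono 4654560 6 0 5; Mono (-2288704) 6 0 6;
  Mono 128 6 1 1; Mono (-1728) 6 1 2; Mono 98816 6 1 3; Mono (-876288) 6 1 4;
  Mono 1562752 6 1 5; Mono (-775488) 6 1 6; Mono (-24) 7 0 1; Mono (-1240) 7 0 2;
  Mono 20808 7 0 3; Mono (-132328) 7 0 4; Mono 213072 7 0 5; Mono (-100288) 7 0 6;
  Mono (-192) 7 1 2; Mono 6144 7 1 3; Mono (-43648) 7 1 4; Mono 71680 7 1 5;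
  Mono (-33984) 7 1 6; Mono (-40) 8 0 2; Mono 528 8 0 3; Mono (-2848) 8 0 4; Mono 4272 8 0 5;
  Mono (-1912) 8 0 6; Mono (-8) 8 1 2; Mono 160 8 1 3; Mono (-944) 8 1 4; Mono 1440 8 1 5;
  Mono (-648) 8 1 6 ].

Definition a4_taylor : poly3 := [
  Mono 294784 0 0 0; Mono 2356480 0 0 1; Mono 36865408 0 0 2; Mono (-45944832) 0 0 3;
  Mono 742067712 0 0 4; Mono (-3366033408) 0 0 5; Mono 1922310144 0 0 6; Mono 209664 1 0 0;
  Mono 820480 1 0 1; Mono 35303680 1 0 2; Mono (-39780608) 1 0 3; Mono 1216791552 1 0 4;
  Mono (-4279495680) 1 0 5; Mono 2425503744 1 0 6; Mono 54400 2 0 0; Mono (-291968) 2 0 1;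
  Mono 13188864 2 0 2; Mono (-25420928) 2 0 3; Mono 823492480 2 0 4; Mono (-2385621504) 2 0 5;
  Mono 1333352448 2 0 6; Mono 6144 3 0 0; Mono (-200320) 3 0 1; Mono 2418048 3 0 2;
  Mono (-13128832) 3 0 3; Mono 306920064 3 0 4; Mono (-761443584) 3 0 5; Mono 417030144 3 0 6;
  Mono 256 4 0 0; Mono (-40960) 4 0 1; Mono 228864 4 0 2; Mono (-4342528) 4 0 3;
  Mono 69713280 4 0 4; Mono (-152168448) 4 0 5; Mono 81153664 4 0 6; Mono (-3712) 5 0 1;
  Mono 14720 5 0 2; Mono (-858240) 5 0 3; Mono 9952640 5 0 4; Mono (-19492608) 5 0 5;
  Mono 10059520 5 0 6; Mono (-128) 6 0 1; Mono 1728 6 0 2; Mono (-98816) 6 0 3;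
  Mono 876288 6 0 4; Mono (-1562752) 6 0 5; Mono 775488 6 0 6; Mono 192 7 0 2;
  Mono (-6144) 7 0 3; Mono 43648 7 0 4; Mono (-71680) 7 0 5; Mono 33984 7 0 6; Mono 8 8 0 2;
  Mono (-160) 8 0 3; Mono 944 8 0 4; Mono (-1440) 8 0 5; Mono 648 8 0 6 ].

Definition a2_cofactor_taylor : poly3 := [
  Mono 448 0 0 0; Mono (-1256) 0 0 1; Mono 40168 0 0 2; Mono 2784 0 0 3; Mono 89568 0 0 4;
  Mono 120 1 0 0; Mono (-1600) 1 0 1; Mono 23160 1 0 2; Mono (-784) 1 0 3; Mono 57504 1 0 4;
  Mono 8 2 0 0; Mono (-532) 2 0 1; Mono 4988 2 0 2; Mono (-820) 2 0 3; Mono 13828 2 0 4;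
  Mono (-68) 3 0 1; Mono 476 3 0 2; Mono (-156) 3 0 3; Mono 1476 3 0 4; Mono (-3) 4 0 1;
  Mono 17 4 0 2; Mono (-9) 4 0 3; Mono 59 4 0 4 ].

Lemma re_P7_taylor_eq u v e : re_P7 (6 + u) e (3 + v) = eval3 re_P7_taylor u v e.
Proof.
  unfold re_P7, a1, a3, a5, a7. cbv [eval3 eval_mono re_P7_taylor coef exp_u exp_v exp_e]. ring.
Qed.

Lemma im_P7_taylor_eq u v e : im_P7 (6 + u) e (3 + v) = eval3 im_P7_taylor u v e.
Proof.
  unfold im_P7, a0, a2, a4, a6. cbv [eval3 eval_mono im_P7_taylor coef exp_u exp_v exp_e]. ring.
Qed.

Lemma a4_taylor_eq u e : a4 (6 + u) e = eval3 a4_taylor u 0 e.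
Proof. unfold a4. cbv [eval3 eval_mono a4_taylor coef exp_u exp_v exp_e]. ring. Qed.

Lemma a2_taylor_eq u e : a2 (6 + u) e = (e ^ 2 - e) * eval3 a2_cofactor_taylor u 0 e.
Proof. unfold a2. cbv [eval3 eval_mono a2_cofactor_taylor coef exp_u exp_v exp_e]. ring. Qed.

Definition box (u v e : R) : Prop := Rabs u <= / 1000 /\ Rabs v <= / 1000 /\ 0 <= e <= / 1000000.

Lemma box_intro u v e :
  Rabs u <= / 1000 -> - / 1000 <= v <= / 1000 -> 0 <= e <= / 1000000 -> box u v e.
Proof. intros Hu Hv He. split; [exact Hu|]. split; [apply Rabs_le_between|]; assumption. Qed.

Lemma box_origin : box 0 0 0.
Proof. apply box_intro; rewrite ?Rabs_R0; lra. Qed.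

Definition slopes_certified (p : poly3) (cu cv ce bu bv be : Z) : bool :=
  let d := 1 # 1000 in
  let de := 1 # 1000000 in
  Z.eqb (coeff 1 0 0 p) cu && Z.eqb (coeff 0 1 0 p) cv && Z.eqb (coeff 0 0 1 p) ce
  && Qle_bool (sumQ (slope_u d d de) p) (inject_Z bu)
  && Qle_bool (sumQ (slope_v d d de) p) (inject_Z bv)
  && Qle_bool (sumQ (slope_e d d de) p) (inject_Z be).

Lemma box_slopes p cu cv ce bu bv be u1 v1 e1 u2 v2 e2 :
  slopes_certified p cu cv ce bu bv be = true -> box u1 v1 e1 -> box u2 v2 e2 ->
  exists gu gv ge,
    eval3 p u2 v2 e2 - eval3 p u1 v1 e1 = (u2 - u1) * gu + (v2 - v1) * gv + (e2 - e1) * ge /\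
    Rabs (gu - IZR cu) <= IZR bu /\ Rabs (gv - IZR cv) <= IZR bv /\ Rabs (ge - IZR ce) <= IZR be.
Proof.
  unfold slopes_certified. rewrite !Bool.andb_true_iff, !Z.eqb_eq.
  intros [[[[[Cu Cv] Ce] Bu] Bv] Be] (Hu1 & Hv1 & He1) (Hu2 & Hv2 & He2).
  apply RMicromega.Qle_true in Bu, Bv, Be. rewrite Q2R_inject_Z in Bu, Bv, Be.
  assert (Hd : Q2R (1 # 1000) = / 1000) by (unfold Q2R; simpl; lra).
  assert (Hde : Q2R (1 # 1000000) = / 1000000) by (unfold Q2R; simpl; lra).
  rewrite <- Hd in Hu1, Hv1, Hu2, Hv2.
  assert (He1' : Rabs e1 <= Q2R (1 # 1000000)) by (rewrite Hde, Rabs_le_between; lra).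
  assert (He2' : Rabs e2 <= Q2R (1 # 1000000)) by (rewrite Hde, Rabs_le_between; lra).
  destruct (eval3_slopes _ _ _ _ _ _ _ _ _ Hu1 Hu2 Hv1 Hv2 He1' He2' p)
    as (gu & gv & ge & Hg & Gu & Gv & Ge).
  rewrite Cu, Cv, Ce in *.
  exists gu, gv, ge. repeat split; [exact Hg | lra ..].
Qed.

Lemma re_P7_slopes u1 v1 e1 u2 v2 e2 : box u1 v1 e1 -> box u2 v2 e2 ->
  exists a b r,
    re_P7 (6 + u2) e2 (3 + v2) - re_P7 (6 + u1) e1 (3 + v1)
      = (u2 - u1) * a + (v2 - v1) * b + (e2 - e1) * r /\
    1399192 <= a <= 1404392 /\ -151028 <= b <= -150028 /\ Rabs r <= 58975264.
Proof.
  intros B1 B2. rewrite !re_P7_taylor_eq.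
  destruct (box_slopes re_P7_taylor 1401792 (-150528) 58875264 2600 500 100000
              _ _ _ _ _ _ ltac:(vm_compute; reflexivity) B1 B2) as (a & b & r & E & Ha & Hb & Hr).
  exists a, b, r. rewrite Rabs_le_between' in Ha, Hb, Hr. rewrite Rabs_le_between. lra.
Qed.

Lemma im_P7_slopes u1 v1 e1 u2 v2 e2 : box u1 v1 e1 -> box u2 v2 e2 ->
  exists c d s,
    im_P7 (6 + u2) e2 (3 + v2) - im_P7 (6 + u1) e1 (3 + v1)
      = (u2 - u1) * c + (v2 - v1) * d + (e2 - e1) * s /\
    -78750 <= c <= -78050 /\ -295034 <= d <= -294534 /\ Rabs s <= 2267640.
Proof.
  intros B1 B2. rewrite !im_P7_taylor_eq.
  destruct (box_slopes im_P7_taylor (-78400) (-294784) (-2264640) 350 250 3000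
              _ _ _ _ _ _ ltac:(vm_compute; reflexivity) B1 B2) as (c & d & s & E & Hc & Hd & Hs).
  exists c, d, s. rewrite Rabs_le_between' in Hc, Hd, Hs. rewrite Rabs_le_between. lra.
Qed.

Lemma re_P7_6_0_3 : re_P7 6 0 3 = 0.
Proof. unfold re_P7, a1, a3, a5, a7; ring. Qed.

Lemma im_P7_6_0_3 : im_P7 6 0 3 = 0.
Proof. unfold im_P7, a0, a2, a4, a6; ring. Qed.

Lemma re_P7_linear u v e : box u v e -> exists a b r,
  re_P7 (6 + u) e (3 + v) = u * a + v * b + e * r /\
  1399192 <= a <= 1404392 /\ -151028 <= b <= -150028 /\ Rabs r <= 58975264.
Proof.
  intros B. destruct (re_P7_slopes _ _ _ _ _ _ box_origin B) as (a & b & r & E & H).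
  exists a, b, r. rewrite !Rplus_0_r, re_P7_6_0_3, !Rminus_0_r in E. split; [lra | exact H].
Qed.

Lemma im_P7_linear u v e : box u v e -> exists c d s,
  im_P7 (6 + u) e (3 + v) = u * c + v * d + e * s /\
  -78750 <= c <= -78050 /\ -295034 <= d <= -294534 /\ Rabs s <= 2267640.
Proof.
  intros B. destruct (im_P7_slopes _ _ _ _ _ _ box_origin B) as (c & d & s & E & H).
  exists c, d, s. rewrite !Rplus_0_r, im_P7_6_0_3, !Rminus_0_r in E. split; [lra | exact H].
Qed.

Lemma jacobian_det_bound a b c d :
  1399192 <= a <= 1404392 -> -151028 <= b <= -150028 ->
  -78750 <= c <= -78050 -> -295034 <= d <= -294534 -> a * d - b * c <= -400000000000.
Proof. intros; nra. Qed.

Lemma a4_pos u e : Rabs u <= / 1000 -> 0 <= e <= / 1000000 -> 0 < a4 (6 + u) e.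
Proof.
  intros Hu He.
  assert (B : box u 0 e) by (apply box_intro; lra).
  destruct (box_slopes a4_taylor 209664 0 2356480 110 0 900 _ _ _ _ _ _
              ltac:(vm_compute; reflexivity) box_origin B) as (g & g0 & h & E & Hg & _ & Hh).
  rewrite <- !a4_taylor_eq, Rplus_0_r in E.
  replace (a4 6 0) with 294784 in E by (unfold a4; ring).
  rewrite Rabs_le_between' in Hg, Hh. rewrite Rabs_le_between in Hu. nra.
Qed.

Lemma a2_nonpos u e : Rabs u <= / 1000 -> 0 <= e <= / 1000000 -> a2 (6 + u) e <= 0.
Proof.
  intros Hu He.
  assert (B : box u 0 e) by (apply box_intro; lra).
  destruct (box_slopes a2_cofactor_taylor 120 0 (-1256) 1 0 2 _ _ _ _ _ _
              ltac:(vm_compute; reflexivity) box_origin B) as (g & g0 & h & E & Hg & _ & Hh).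
  replace (eval3 a2_cofactor_taylor 0 0 0) with 448 in E
    by (cbv [eval3 eval_mono a2_cofactor_taylor coef exp_u exp_v exp_e]; ring).
  rewrite a2_taylor_eq.
  rewrite Rabs_le_between' in Hg, Hh. rewrite Rabs_le_between in Hu.
  assert (0 < eval3 a2_cofactor_taylor u 0 e) by nra.
  assert (e ^ 2 - e <= 0) by nra.
  nra.
Qed.

Lemma a0_nonneg m e : 0 <= a0 m e.
Proof.
  unfold a0. replace ((e - 1) ^ 4) with (((e - 1) ^ 2) ^ 2) by ring.
  pose proof (pow2_ge_0 ((e - 1) ^ 2)). pose proof (pow2_ge_0 e). nra.
Qed.

Lemma im_P7_strict_anti u e x y : Rabs u <= / 1000 -> 0 <= e <= / 1000000 ->
  0 <= x -> x < y -> im_P7 (6 + u) e y < im_P7 (6 + u) e x.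
Proof.
  intros Hu He Hx Hxy. unfold im_P7.
  apply cubic_strict_anti; auto using a0_nonneg, a2_nonpos, a4_pos.
Qed.

Lemma im_P7_sign_change u e : Rabs u <= / 1000 -> 0 <= e <= / 1000000 ->
  0 < im_P7 (6 + u) e (3 - / 1000) /\ im_P7 (6 + u) e (3 + / 1000) < 0.
Proof.
  intros Hu He.
  assert (Hl : box u (- / 1000) e) by (apply box_intro; lra).
  assert (Hr : box u (/ 1000) e) by (apply box_intro; lra).
  destruct (im_P7_linear _ _ _ Hl) as (c & d & s & El & Hc & Hd & Hs).
  destruct (im_P7_linear _ _ _ Hr) as (c' & d' & s' & Er & Hc' & Hd' & Hs').
  replace (3 - / 1000) with (3 + - / 1000) by ring. rewrite El, Er.
  rewrite Rabs_le_between in Hu, Hs, Hs'. split; nra.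
Qed.

Lemma im_P7_root_window u e x : Rabs u <= / 1000 -> 0 <= e <= / 1000000 ->
  0 <= x -> im_P7 (6 + u) e x = 0 -> Rabs (x - 3) <= / 1000.
Proof.
  intros Hu He Hx H0. destruct (im_P7_sign_change u e Hu He) as [Hl Hr].
  apply Rabs_le_between'. split; apply Rnot_lt_le; intro Hlt.
  - pose proof (im_P7_strict_anti u e x (3 - / 1000) Hu He Hx Hlt). lra.
  - pose proof (im_P7_strict_anti u e (3 + / 1000) x Hu He ltac:(lra) Hlt). lra.
Qed.

Lemma im_P7_root_unique u e x y : Rabs u <= / 1000 -> 0 <= e <= / 1000000 ->
  0 <= x -> 0 <= y -> im_P7 (6 + u) e x = 0 -> im_P7 (6 + u) e y = 0 -> x = y.
Proof.
  intros Hu He Hx Hy Ex Ey.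
  destruct (Rtotal_order x y) as [Hxy | [Hxy | Hxy]]; [| exact Hxy |].
  - pose proof (im_P7_strict_anti u e x y Hu He Hx Hxy). lra.
  - pose proof (im_P7_strict_anti u e y x Hu He Hy Hxy). lra.
Qed.

Lemma im_P7_root u e : Rabs u <= / 1000 -> 0 <= e <= / 1000000 ->
  {v | Rabs v <= / 1000 /\ im_P7 (6 + u) e (3 + v) = 0}.
Proof.
  intros Hu He. destruct (im_P7_sign_change u e Hu He) as [Hl Hr].
  assert (Hcont : continuity (fun v => - im_P7 (6 + u) e (3 + v)))
    by (unfold im_P7; reg).
  destruct (IVT _ (- / 1000) (/ 1000) Hcont) as (v & Hv & Hv0).
  - lra.
  - replace (3 + - / 1000) with (3 - / 1000) by ring. lra.
  - lra.
  - exists v. split; [apply Rabs_le_between; lra | lra].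
Qed.

(** * The critical parameter *)

Definition critical (e u v : R) : Prop :=
  box u v e /\ re_P7 (6 + u) e (3 + v) = 0 /\ im_P7 (6 + u) e (3 + v) = 0.

(* Cramer's rule: v is eliminated between the linearizations of re_P7 and im_P7. *)
Lemma re_P7_on_im_zero u v e : box u v e -> im_P7 (6 + u) e (3 + v) = 0 ->
  exists d D K, d < 0 /\ D <= -400000000000 /\ Rabs K <= 18000000000000 /\
    re_P7 (6 + u) e (3 + v) * d = u * D + e * K.
Proof.
  intros B I0.
  destruct (re_P7_linear _ _ _ B) as (a & b & r & Er & Ha & Hb & Hr).
  destruct (im_P7_linear _ _ _ B) as (c & d & s & Ei & Hc & Hd & Hs).
  exists d, (a * d - b * c), (r * d - b * s).
  split; [lra|]. split; [apply jacobian_det_bound; assumption|]. split.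
  - assert (Rabs (r * d) <= 58975264 * 295034)
      by (apply Rabs_mult_le; [exact Hr | apply Rabs_le_between; lra]).
    assert (Rabs (b * s) <= 151028 * 2267640)
      by (apply Rabs_mult_le; [apply Rabs_le_between; lra | exact Hs]).
    pose proof (Rabs_triang (r * d) (- (b * s))) as T. rewrite Rabs_Ropp in T.
    unfold Rminus. lra.
  - rewrite Er.
    transitivity (u * (a * d - b * c) + e * (r * d - b * s) + b * (u * c + v * d + e * s)); [ring|].
    rewrite <- Ei, I0. ring.
Qed.

Lemma v_small_on_im_zero u v e : box u v e -> im_P7 (6 + u) e (3 + v) = 0 ->
  Rabs v <= Rabs u / 3 + 8 * e.
Proof.
  intros B I0. pose proof B as (_ & _ & He).
  destruct (im_P7_linear _ _ _ B) as (c & d & s & Ei & Hc & Hd & Hs).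
  assert (Hvd : Rabs v * 294534 <= Rabs (v * d))
    by (apply Rabs_mult_ge; rewrite Rabs_left; lra).
  assert (Huc : Rabs (u * c) <= Rabs u * 78750)
    by (apply Rabs_mult_le; [apply Rle_refl | apply Rabs_le_between; lra]).
  assert (Hes : Rabs (e * s) <= e * 2267640)
    by (apply Rabs_mult_le; [rewrite Rabs_right by lra; lra | exact Hs]).
  replace (v * d) with (- (u * c + e * s)) in Hvd by lra.
  rewrite Rabs_Ropp in Hvd. pose proof (Rabs_triang (u * c) (e * s)). pose proof (Rabs_pos u).
  lra.
Qed.

Lemma critical_small e u v : 0 <= e -> critical e u v -> Rabs u <= 45 * e /\ Rabs v <= 23 * e.
Proof.
  intros He (B & R0 & I0).
  destruct (re_P7_on_im_zero u v e B I0) as (d & D & K & Hd & HD & HK & E).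
  rewrite R0, Rmult_0_l in E.
  assert (Hu : Rabs u <= 45 * e).
  { assert (Rabs u * 400000000000 <= Rabs (u * D))
      by (apply Rabs_mult_ge; rewrite Rabs_left; lra).
    replace (u * D) with (- (e * K)) in * by lra.
    rewrite Rabs_Ropp, Rabs_mult, (Rabs_right e) in * by lra.
    assert (e * Rabs K <= e * 18000000000000) by (apply Rmult_le_compat_l; lra).
    lra. }
  split; [exact Hu|]. pose proof (v_small_on_im_zero u v e B I0). lra.
Qed.

Lemma re_P7_sign_on_im_zero u v e : box u v e -> im_P7 (6 + u) e (3 + v) = 0 ->
  (/ 1000 <= u -> 0 < re_P7 (6 + u) e (3 + v)) /\ (u <= - / 1000 -> re_P7 (6 + u) e (3 + v) < 0).
Proof.
  intros B I0. destruct (re_P7_on_im_zero u v e B I0) as (d & D & K & Hd & HD & HK & E).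
  destruct B as (_ & _ & He). rewrite Rabs_le_between in HK.
  assert (Hek : Rabs (e * K) <= / 1000000 * 18000000000000)
    by (apply Rabs_mult_le; apply Rabs_le_between; lra).
  rewrite Rabs_le_between in Hek.
  split; intro Hu.
  - assert (u * D <= / 1000 * -400000000000) by nra. nra.
  - assert (/ 1000 * 400000000000 <= u * D) by nra. nra.
Qed.

Lemma im_zero_lipschitz e u1 v1 u2 v2 : box u1 v1 e -> box u2 v2 e ->
  im_P7 (6 + u1) e (3 + v1) = 0 -> im_P7 (6 + u2) e (3 + v2) = 0 ->
  Rabs (v2 - v1) <= Rabs (u2 - u1) /\
  Rabs (re_P7 (6 + u2) e (3 + v2) - re_P7 (6 + u1) e (3 + v1)) <= 2000000 * Rabs (u2 - u1).
Proof.
  intros B1 B2 I1 I2.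
  destruct (im_P7_slopes _ _ _ _ _ _ B1 B2) as (c & d & s & Ei & Hc & Hd & _).
  destruct (re_P7_slopes _ _ _ _ _ _ B1 B2) as (a & b & r & Er & Ha & Hb & _).
  rewrite I1, I2 in Ei. rewrite (Rminus_diag e), Rmult_0_l, Rplus_0_r in Ei, Er.
  set (du := u2 - u1) in *. set (dv := v2 - v1) in *.
  assert (Hv : Rabs dv <= Rabs du).
  { assert (Rabs dv * 294534 <= Rabs (dv * d))
      by (apply Rabs_mult_ge; rewrite Rabs_left; lra).
    assert (Rabs (du * c) <= Rabs du * 78750)
      by (apply Rabs_mult_le; [apply Rle_refl | apply Rabs_le_between; lra]).
    replace (dv * d) with (- (du * c)) in * by lra. rewrite Rabs_Ropp in *.
    pose proof (Rabs_pos du). lra. }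
  split; [exact Hv|].
  rewrite Er.
  assert (Rabs (du * a) <= Rabs du * 1404392)
    by (apply Rabs_mult_le; [apply Rle_refl | apply Rabs_le_between; lra]).
  assert (Rabs (dv * b) <= Rabs du * 151028)
    by (apply Rabs_mult_le; [exact Hv | apply Rabs_le_between; lra]).
  pose proof (Rabs_triang (du * a) (dv * b)). pose proof (Rabs_pos du). lra.
Qed.

Lemma critical_unique e u1 v1 u2 v2 : critical e u1 v1 -> critical e u2 v2 -> u1 = u2 /\ v1 = v2.
Proof.
  intros (B1 & R1 & I1) (B2 & R2 & I2).
  destruct (re_P7_slopes _ _ _ _ _ _ B1 B2) as (a & b & r & Er & Ha & Hb & _).
  destruct (im_P7_slopes _ _ _ _ _ _ B1 B2) as (c & d & s & Ei & Hc & Hd & _).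
  rewrite R1, R2 in Er. rewrite I1, I2 in Ei.
  rewrite (Rminus_diag e), Rmult_0_l, Rplus_0_r in Ei, Er.
  pose proof (jacobian_det_bound a b c d Ha Hb Hc Hd).
  destruct (cramer_trivial a b c d (u2 - u1) (v2 - v1)); lra.
Qed.

Lemma critical_exists e : 0 <= e <= / 1000000 -> exists u v, critical e u v.
Proof.
  intros He.
  assert (Hclamp : forall a, Rabs (clamp (/ 1000) a) <= / 1000)
    by (intro; apply Rabs_clamp_le; lra).
  pose (v_of a := proj1_sig (im_P7_root (clamp (/ 1000) a) e (Hclamp a) He)).
  assert (Hv : forall a, box (clamp (/ 1000) a) (v_of a) e /\
                    im_P7 (6 + clamp (/ 1000) a) e (3 + v_of a) = 0).
  { intro a. destruct (proj2_sig (im_P7_root (clamp (/ 1000) a) e (Hclamp a) He)) as [Hb Hi].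
    split; [apply box_intro; [apply Hclamp | apply Rabs_le_between, Hb | exact He] | exact Hi]. }
  (* Along the root curve of im_P7, re_P7 is Lipschitz in u; clamping u to the box makes it a
     continuous function on all of R, as IVT requires. *)
  pose (h a := re_P7 (6 + clamp (/ 1000) a) e (3 + v_of a)).
  assert (Hh : continuity h).
  { apply lipschitz_continuity with 2000000. intros a b.
    destruct (Hv a) as [Ba Ia]. destruct (Hv b) as [Bb Ib].
    destruct (im_zero_lipschitz _ _ _ _ _ Bb Ba Ib Ia) as [_ L].
    pose proof (clamp_lipschitz (/ 1000) a b). unfold h. lra. }
  assert (Hd : Rabs (/ 1000) <= / 1000) by (apply Rabs_le_between; lra).
  assert (Hmd : Rabs (- / 1000) <= / 1000) by (apply Rabs_le_between; lra).
  destruct (Hv (/ 1000)) as [Bp Ip]. destruct (Hv (- / 1000)) as [Bm Im].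
  rewrite clamp_id in Bp, Ip by exact Hd. rewrite clamp_id in Bm, Im by exact Hmd.
  destruct (IVT h (- / 1000) (/ 1000) Hh) as (a & Ha & Ha0).
  - lra.
  - unfold h. rewrite clamp_id by exact Hmd.
    apply (re_P7_sign_on_im_zero _ _ _ Bm Im). lra.
  - unfold h. rewrite clamp_id by exact Hd.
    apply (re_P7_sign_on_im_zero _ _ _ Bp Ip). lra.
  - assert (Hda : Rabs a <= / 1000) by (apply Rabs_le_between; lra).
    destruct (Hv a) as [Ba Ia]. unfold h in Ha0. rewrite clamp_id in Ba, Ia, Ha0 by exact Hda.
    exists a, (v_of a). exact (conj Ba (conj Ha0 Ia)).
Qed.

Lemma critical_unique_imag_pair e u v : 0 <= e -> critical e u v ->
  unique_imag_pair (6 + u) e (sqrt (3 + v)).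
Proof.
  intros He0 ((Hu & Hv & He) & R0 & I0).
  assert (Hx : 0 < 3 + v) by (apply Rabs_le_between in Hv; lra).
  set (x := 3 + v) in *.
  assert (Hw2 : sqrt x ^ 2 = x) by (rewrite <- Rsqr_pow2; apply Rsqr_sqrt; lra).
  split; [apply sqrt_lt_R0; exact Hx|].
  intros [a b] [Ha Hb]. simpl in Ha, Hb. subst a.
  rewrite P7_imaginary_axis_root. split.
  - intros [HR HI].
    apply Rmult_integral in HI. destruct HI as [HI | HI]; [contradiction|].
    assert (Hb2 : b ^ 2 = x)
      by (apply (im_P7_root_unique u e); auto using pow2_ge_0; lra).
    assert (Z : (b - sqrt x) * (b + sqrt x) = 0)
      by (transitivity (b ^ 2 - sqrt x ^ 2); [ring | rewrite Hb2, Hw2; ring]).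
    apply Rmult_integral in Z. destruct Z as [Z | Z]; [left | right]; f_equal; lra.
  - assert (Hm : (- sqrt x) ^ 2 = x) by (rewrite <- Hw2 at 2; ring).
    intros [H | H]; injection H as ->; [rewrite Hw2 | rewrite Hm]; rewrite R0, I0; split; ring.
Qed.

Lemma unique_imag_pair_critical m e w : Rabs (m - 6) <= / 1000 -> 0 <= e <= / 1000000 ->
  unique_imag_pair m e w -> critical e (m - 6) (w ^ 2 - 3).
Proof.
  intros Hm He [Hw Hpair].
  assert (H0 : P7 (0, w) m e = 0%C)
    by (apply Hpair; [split; simpl; lra | left; reflexivity]).
  apply P7_imaginary_axis_root in H0. destruct H0 as [HR HI].
  apply Rmult_integral in HI. destruct HI as [HI | HI]; [lra|].
  replace m with (6 + (m - 6)) in HR, HI by ring.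
  pose proof (im_P7_root_window _ _ _ Hm He (pow2_ge_0 w) HI) as Hx.
  replace (w ^ 2) with (3 + (w ^ 2 - 3)) in HR, HI by ring.
  split; [apply box_intro; [exact Hm | apply Rabs_le_between; exact Hx | exact He]|].
  split; assumption.
Qed.

Definition critical_shift (e : R) : R * R :=
  epsilon (inhabits (0, 0)) (fun uv => critical e (fst uv) (snd uv)).

Lemma critical_shift_spec e : 0 <= e <= / 1000000 ->
  critical e (fst (critical_shift e)) (snd (critical_shift e)).
Proof.
  intro He. apply (epsilon_spec (inhabits (0, 0)) (fun uv => critical e (fst uv) (snd uv))).
  destruct (critical_exists e He) as (u & v & H). exists (u, v). exact H.
Qed.

Theorem proposition5p1 :
  exists (eps0 delta : R) (mc w : R -> R),
    0 < eps0 /\ 0 < delta /\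
    (forall e, 0 < e < eps0 -> 6 - delta < mc e < 6 + delta) /\
    filterlim mc (at_right 0) (locally 6) /\
    (forall e, 0 < e < eps0 -> unique_imag_pair (mc e) e (w e)) /\
    filterlim w (at_right 0) (locally (sqrt 3)) /\
    (* uniqueness of m^c among functions with the same properties *)
    (forall g : R -> R,
       (forall e, 0 < e < eps0 -> 6 - delta < g e < 6 + delta) ->
       filterlim g (at_right 0) (locally 6) ->
       (forall e, 0 < e < eps0 -> exists we, unique_imag_pair (g e) e we) ->
       forall e, 0 < e < eps0 -> g e = mc e).
Proof.
  pose (u e := fst (critical_shift e)). pose (v e := snd (critical_shift e)).
  assert (Hc : forall e, 0 < e < / 1000000 -> critical e (u e) (v e))
    by (intros e He; apply critical_shift_spec; lra).
  assert (Hs : forall e, 0 < e < / 1000000 -> Rabs (u e) <= 45 * e /\ Rabs (v e) <= 23 * e)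
    by (intros e He; apply critical_small; [lra | apply Hc, He]).
  exists (/ 1000000), (/ 1000), (fun e => 6 + u e), (fun e => sqrt (3 + v e)).
  split; [lra|]. split; [lra|]. split; [|split; [|split; [|split]]].
  - intros e He. destruct (Hs e He) as [Hu _]. rewrite Rabs_le_between in Hu. lra.
  - apply (filterlim_at_right_of_linear_bound _ _ 45 (/ 1000000)); [lra|].
    intros e He. replace (6 + u e - 6) with (u e) by ring. apply Hs, He.
  - intros e He. apply (critical_unique_imag_pair e); [lra | apply Hc, He].
  - apply (filterlim_at_right_of_linear_bound _ _ 23 (/ 1000000)); [lra|].
    intros e He. destruct (Hs e He) as [_ Hv]. destruct (Hc e He) as ((_ & Hb & _) & _).
    rewrite Rabs_le_between in Hb.
    eapply Rle_trans; [apply sqrt_sub_le; lra|]. replace (3 + v e - 3) with (v e) by ring. exact Hv.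
  - intros g Hg _ Hw e He. destruct (Hw e He) as [we Hwe].
    assert (Hge : Rabs (g e - 6) <= / 1000) by (apply Rabs_le_between; specialize (Hg e He); lra).
    pose proof (unique_imag_pair_critical (g e) e we Hge ltac:(lra) Hwe) as Hcg.
    destruct (critical_unique e _ _ _ _ Hcg (Hc e He)) as [Hu _]. lra.
Qed.
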